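(* A tree share $\tau\in\mathbb{T}$ is unary if and only if $$\tau\neq\circ\ \wedge\ \forall\tau'\in\mathbb{T}.\ \big(\tau'\bowtie\mathcal{L}\sqsubset\tau\ \leftrightarrow\ \tau'\bowtie\mathcal{R}\sqsubset\tau\big).$$
   Context: A tree share is a finite binary tree whose leaves are labelled $\bullet$ (black) or $\circ$ (white), in canonical form: no subtree has the form $\mathrm{Node}(\bullet,\bullet)$ or $\mathrm{Node}(\circ,\circ)$ (such subtrees are identified with the leaf $\bullet$, resp. $\circ$). $\mathbb{T}$ denotes the set of tree shares. $\tau_1\sqcup\tau_2$ is computed by unfolding both trees (replacing a leaf $\ell$ by $\mathrm{Node}(\ell,\ell)$ as needed) to a common shape, taking Boolean join leafwise ($\bullet$ = true, $\circ$ = false), and refolding to canonical form. $\tau_1\sqsubset\tau_2$ means $\tau_1\sqcup\tau_2=\tau_2$ and $\tau_1\neq\tau_2$. The product $\tau_1\bowtie\tau_2$ is obtained by replacing every $\bullet$ leaf of $\tau_1$ by a copy of $\tau_2$ and refolding to canonical form. $\mathcal{L}=\mathrm{Node}(\bullet,\circ)$, $\mathcal{R}=\mathrm{Node}(\circ,\bullet)$. A unary tree is a tree share with exactly one black leaf. *)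

(* Tree shares as canonical finite binary trees with boolean leaves
   (true = black bullet, false = white circle). *)
From Stdlib Require Import Bool.

Inductive tree : Type :=
| Leaf (b : bool)
| Node (l r : tree).

Definition black : tree := Leaf true.
Definition white : tree := Leaf false.

Fixpoint canonical (t : tree) : bool :=
  match t with
  | Leaf _ => true
  | Node (Leaf a) (Leaf b) => negb (Bool.eqb a b)
  | Node l r => canonical l && canonical r
  end.

(* one refolding step: Node(b,b) is identified with the leaf b *)
Definition mkNode (l r : tree) : tree :=
  match l, r with
  | Leaf a, Leaf b => if Bool.eqb a b then Leaf a else Node l r
  | _, _ => Node l r
  end.

(* join: unfold a leaf x to Node(x,x) as needed to reach a common shape,
   take boolean or leafwise, refold bottom-up *)
Fixpoint join (t1 : tree) : tree -> tree :=
  fix joinA (t2 : tree) : tree :=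
  match t1, t2 with
  | Leaf a, Leaf b => Leaf (a || b)
  | Leaf a, Node l2 r2 => mkNode (joinA l2) (joinA r2)
  | Node l1 r1, Leaf b => mkNode (join l1 (Leaf b)) (join r1 (Leaf b))
  | Node l1 r1, Node l2 r2 => mkNode (join l1 l2) (join r1 r2)
  end.

Definition share_lt (t1 t2 : tree) : Prop := join t1 t2 = t2 /\ t1 <> t2.

Fixpoint bowtie (t1 t2 : tree) : tree :=
  match t1 with
  | Leaf true => t2
  | Leaf false => Leaf false
  | Node l r => mkNode (bowtie l t2) (bowtie r t2)
  end.

Definition L_share : tree := Node black white.
Definition R_share : tree := Node white black.

Fixpoint black_leaves (t : tree) : nat :=
  match t with
  | Leaf true => 1
  | Leaf false => 0
  | Node l r => black_leaves l + black_leaves r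
  end.

Definition unary (t : tree) : Prop := black_leaves t = 1.

(* Everything rests on one structural fact ([share_le_mkNode],
   [share_lt_mkNode]): comparing a refolded node mkNode A B with a canonical
   node Node l r splits into the componentwise comparisons A ⊑ l and B ⊑ r,
   where x ⊑ y means x ⊔ y = y.

   - A unary tau is black, or Node l white / Node white r with l, r unary.
     For black both sides always hold; in the node cases both sides reduce,
     for t = Node a b, to the same statement about l (resp. r), so agreement
     propagates by induction on tau ([unary_agrees]).
   - If tau is neither white nor unary we exhibit a separating share t.  A
     proper node has a separating share for ⊑ ([node_separable_le]), found by
     descending to a black child, where the share black itself separates;
     separating shares move from a child to its parent by wrapping them as
     Node t white or Node white t ([separates_lift_left/right]).  The same
     descent for ⊏ gives [nonunary_separable]. *)

From Stdlib Require Import Bool Lia.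

Lemma canonical_Node l r : canonical (Node l r) =
  match l, r with
  | Leaf a, Leaf b => negb (Bool.eqb a b)
  | _, _ => canonical l && canonical r
  end.
Proof. destruct l, r; reflexivity. Qed.

Lemma canonical_Node_inv l r :
  canonical (Node l r) = true -> canonical l = true /\ canonical r = true.
Proof.
  rewrite canonical_Node. destruct l, r; rewrite ?andb_true_iff; auto.
Qed.

Lemma canonical_Node_intro l r :
  canonical l = true -> canonical r = true -> l <> r -> canonical (Node l r) = true.
Proof.
  intros Hl Hr Hne. rewrite canonical_Node.
  destruct l as [[|]|l1 l2], r as [[|]|r1 r2]; rewrite ?Hl, ?Hr; auto; congruence.
Qed.

Lemma canonical_mkNode l r :
  canonical l = true -> canonical r = true -> canonical (mkNode l r) = true.
Proof.
  intros Hl Hr. destruct l as [a|l1 l2], r as [b|r1 r2];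
    try (cbn [mkNode]; rewrite canonical_Node, Hl, Hr; reflexivity).
  simpl. destruct (Bool.eqb a b) eqn:E; [reflexivity|].
  now rewrite canonical_Node, E.
Qed.

Lemma mkNode_canonical l r : canonical (Node l r) = true -> mkNode l r = Node l r.
Proof.
  destruct l as [a|l1 l2], r as [b|r1 r2]; simpl; auto.
  destruct (Bool.eqb a b); simpl; auto; discriminate.
Qed.

Lemma mkNode_eq_Node A B l r : mkNode A B = Node l r -> A = l /\ B = r.
Proof.
  destruct A, B; simpl; try (destruct (Bool.eqb _ _)); intro H; inversion H; auto.
Qed.

Lemma mkNode_eq_Node_iff A B l r :
  canonical (Node l r) = true -> (mkNode A B = Node l r <-> A = l /\ B = r).
Proof.
  intro H. split; [apply mkNode_eq_Node|].
  intros [-> ->]. now apply mkNode_canonical.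
Qed.

Lemma mkNode_eq_Leaf A B c : mkNode A B = Leaf c -> A = Leaf c /\ B = Leaf c.
Proof.
  destruct A, B; simpl; try discriminate.
  destruct (Bool.eqb b b0) eqn:E; intro H; inversion H; subst.
  apply eqb_prop in E; subst; auto.
Qed.

Lemma white_dec t : {t = white} + {t <> white}.
Proof. destruct t as [[|]|l r]; [right|left|right]; try reflexivity; discriminate. Qed.

Lemma join_mkNode_Node A B l r : join (mkNode A B) (Node l r) = mkNode (join A l) (join B r).
Proof.
  destruct A, B; simpl; auto. destruct (Bool.eqb b b0) eqn:E; simpl; auto.
  apply eqb_prop in E; subst; auto.
Qed.

Lemma join_white_r t : canonical t = true -> join t white = t.
Proof.
  induction t as [b|l IHl r IHr]; intro H; simpl.
  - now rewrite orb_false_r.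
  - destruct (canonical_Node_inv _ _ H).
    fold white. rewrite IHl, IHr by assumption. now apply mkNode_canonical.
Qed.

Lemma join_white_l t : canonical t = true -> join white t = t.
Proof.
  induction t as [b|l IHl r IHr]; intro H; [reflexivity|].
  destruct (canonical_Node_inv _ _ H).
  change (mkNode (join white l) (join white r) = Node l r).
  rewrite IHl, IHr by assumption. now apply mkNode_canonical.
Qed.

Lemma join_black_r t : join t black = black.
Proof.
  induction t as [b|l IHl r IHr]; simpl.
  - now rewrite orb_true_r.
  - fold black. now rewrite IHl, IHr.
Qed.

Lemma join_black_l t : join black t = black.
Proof.
  induction t as [b|l IHl r IHr]; [reflexivity|].
  change (mkNode (join black l) (join black r) = black). now rewrite IHl, IHr.
Qed.

Definition share_le (x y : tree) : Prop := join x y = y.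

Lemma share_lt_le x y : share_lt x y <-> share_le x y /\ x <> y.
Proof. reflexivity. Qed.

Lemma share_le_white_l y : canonical y = true -> share_le white y.
Proof. apply join_white_l. Qed.

Lemma share_le_white_r x : canonical x = true -> (share_le x white <-> x = white).
Proof. intro H. unfold share_le. now rewrite join_white_r. Qed.

Lemma share_le_black_l y : share_le black y <-> y = black.
Proof. unfold share_le. rewrite join_black_l. split; auto. Qed.

Lemma share_lt_black_l y : ~ share_lt black y.
Proof. rewrite share_lt_le, share_le_black_l. intros [-> N]. now apply N. Qed.

Lemma share_lt_black_r x : share_lt x black <-> x <> black.
Proof. unfold share_lt. rewrite join_black_r. tauto. Qed.

Lemma share_le_mkNode A B l r : canonical (Node l r) = true ->
  (share_le (mkNode A B) (Node l r) <-> share_le A l /\ share_le B r).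
Proof. intro H. unfold share_le. rewrite join_mkNode_Node. now apply mkNode_eq_Node_iff. Qed.

Lemma share_lt_mkNode A B l r : canonical (Node l r) = true ->
  (share_lt (mkNode A B) (Node l r) <->
   share_le A l /\ share_le B r /\ ~ (A = l /\ B = r)).
Proof.
  intro H. rewrite share_lt_le, share_le_mkNode, mkNode_eq_Node_iff by assumption. tauto.
Qed.

Lemma share_lt_mkNode_white_r A B l : canonical B = true -> canonical (Node l white) = true ->
  (share_lt (mkNode A B) (Node l white) <-> B = white /\ share_lt A l).
Proof.
  intros HB H. rewrite share_lt_mkNode, share_le_white_r, share_lt_le by assumption. tauto.
Qed.

Lemma share_lt_mkNode_white_l A B r : canonical A = true -> canonical (Node white r) = true ->
  (share_lt (mkNode A B) (Node white r) <-> A = white /\ share_lt B r).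
Proof.
  intros HA H. rewrite share_lt_mkNode, share_le_white_r, share_lt_le by assumption. tauto.
Qed.

Lemma share_lt_mkNode_white_below A l r : canonical (Node l r) = true -> r <> white ->
  (share_lt (mkNode A white) (Node l r) <-> share_le A l).
Proof.
  intros H Hr. destruct (canonical_Node_inv _ _ H) as [_ Hrc].
  rewrite share_lt_mkNode by assumption.
  pose proof (share_le_white_l r Hrc). intuition congruence.
Qed.

Lemma bowtie_Node l r X : bowtie (Node l r) X = mkNode (bowtie l X) (bowtie r X).
Proof. reflexivity. Qed.

Lemma bowtie_white_l X : bowtie white X = white.
Proof. reflexivity. Qed.

Lemma bowtie_black_l X : bowtie black X = X.
Proof. reflexivity. Qed.

Lemma canonical_bowtie t X : canonical X = true -> canonical (bowtie t X) = true.
Proof.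
  intro H. induction t as [[|]|l IHl r IHr]; simpl; auto using canonical_mkNode.
Qed.

Lemma bowtie_eq_white t X : canonical t = true -> X <> white ->
  (bowtie t X = white <-> t = white).
Proof.
  intros Ht HX. split; [|now intros ->].
  induction t as [[|]|l IHl r IHr]; simpl; intro E; [contradiction | reflexivity |].
  destruct (canonical_Node_inv _ _ Ht) as [Hl Hr].
  apply mkNode_eq_Leaf in E as [El Er].
  apply IHl in El; apply IHr in Er; auto. subst. discriminate.
Qed.

Lemma bowtie_neq_black t X : X <> black -> bowtie t X <> black.
Proof.
  intro HX. induction t as [[|]|l IHl r IHr]; simpl; try discriminate; auto.
  intro E. apply mkNode_eq_Leaf in E as [E _]. auto.
Qed.

(* L and R as refolded nodes, so that [share_lt_mkNode] applies to them. *)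
Lemma L_share_mkNode : L_share = mkNode black white.
Proof. reflexivity. Qed.

Lemma R_share_mkNode : R_share = mkNode white black.
Proof. reflexivity. Qed.

Lemma black_leaves_zero t : canonical t = true -> black_leaves t = 0 -> t = white.
Proof.
  induction t as [[|]|l IHl r IHr]; simpl; intros H E; try discriminate; auto.
  destruct (canonical_Node_inv _ _ H).
  rewrite IHl, IHr in H by (auto; lia). discriminate.
Qed.

Definition agrees (tau : tree) : Prop :=
  forall t, canonical t = true ->
    (share_lt (bowtie t L_share) tau <-> share_lt (bowtie t R_share) tau).

Lemma agrees_black : agrees black.
Proof.
  intros t _. rewrite !share_lt_black_r.
  pose proof (bowtie_neq_black t L_share ltac:(discriminate)).
  pose proof (bowtie_neq_black t R_share ltac:(discriminate)). tauto.
Qed.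

Lemma agrees_Node_white_r l : canonical (Node l white) = true -> agrees l ->
  agrees (Node l white).
Proof.
  intros H Hl [[|]|a b] Ht; [| reflexivity |].
  - rewrite !bowtie_black_l, L_share_mkNode, R_share_mkNode.
    rewrite !share_lt_mkNode_white_r by (auto; reflexivity).
    pose proof (share_lt_black_l l). intuition discriminate.
  - destruct (canonical_Node_inv _ _ Ht) as [Ha Hb].
    rewrite !bowtie_Node, !share_lt_mkNode_white_r, !bowtie_eq_white
      by (auto using canonical_bowtie; discriminate).
    now rewrite (Hl a Ha).
Qed.

Lemma agrees_Node_white_l r : canonical (Node white r) = true -> agrees r ->
  agrees (Node white r).
Proof.
  intros H Hr [[|]|a b] Ht; [| reflexivity |].
  - rewrite !bowtie_black_l, L_share_mkNode, R_share_mkNode.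
    rewrite !share_lt_mkNode_white_l by (auto; reflexivity).
    pose proof (share_lt_black_l r). intuition discriminate.
  - destruct (canonical_Node_inv _ _ Ht) as [Ha Hb].
    rewrite !bowtie_Node, !share_lt_mkNode_white_l, !bowtie_eq_white
      by (auto using canonical_bowtie; discriminate).
    now rewrite (Hr b Hb).
Qed.

(* A unary share is black or a node with one white child and one unary child. *)
Lemma unary_agrees tau : canonical tau = true -> unary tau -> agrees tau.
Proof.
  unfold unary. induction tau as [[|]|l IHl r IHr]; simpl; intros H U;
    try discriminate; [apply agrees_black|].
  destruct (canonical_Node_inv _ _ H) as [Hl Hr].
  assert (U' : (black_leaves l = 1 /\ black_leaves r = 0) \/
               (black_leaves l = 0 /\ black_leaves r = 1)) by lia.
  destruct U' as [[Ul Ur]|[Ul Ur]].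
  - rewrite (black_leaves_zero r Hr Ur) in *. apply agrees_Node_white_r; auto.
  - rewrite (black_leaves_zero l Hl Ul) in *. apply agrees_Node_white_l; auto.
Qed.

Definition separates (R : tree -> Prop) (a : tree) : Prop :=
  canonical a = true /\ ~ (R (bowtie a L_share) <-> R (bowtie a R_share)).

Lemma separates_nonwhite R a : separates R a -> a <> white.
Proof. intros [_ N] ->. apply N. rewrite !bowtie_white_l. tauto. Qed.

Lemma separates_lift_left (R R' : tree -> Prop) a : separates R a ->
  (forall A, canonical A = true -> (R' (mkNode A white) <-> R A)) ->
  separates R' (Node a white).
Proof.
  intros Hsep HR. pose proof (separates_nonwhite _ _ Hsep) as Haw.
  destruct Hsep as [Ha N]. split.
  - apply canonical_Node_intro; auto.
  - rewrite !bowtie_Node, !bowtie_white_l, !HR by (apply canonical_bowtie; reflexivity).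
    exact N.
Qed.

Lemma separates_lift_right (R R' : tree -> Prop) a : separates R a ->
  (forall B, canonical B = true -> (R' (mkNode white B) <-> R B)) ->
  separates R' (Node white a).
Proof.
  intros Hsep HR. pose proof (separates_nonwhite _ _ Hsep) as Haw.
  destruct Hsep as [Ha N]. split.
  - apply canonical_Node_intro; auto.
  - rewrite !bowtie_Node, !bowtie_white_l, !HR by (apply canonical_bowtie; reflexivity).
    exact N.
Qed.

Lemma separates_le_lt tau a : separates (fun x => share_le x tau) a ->
  bowtie a L_share <> tau -> bowtie a R_share <> tau ->
  separates (fun x => share_lt x tau) a.
Proof. intros [Ha N] HL HR. split; [exact Ha|]. rewrite !share_lt_le. tauto. Qed.

Lemma black_separates_le x y : canonical (Node x y) = true -> x = black \/ y = black ->
  separates (fun z => share_le z (Node x y)) black.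
Proof.
  intros H Hxy. destruct (canonical_Node_inv _ _ H) as [Hx Hy]. split; [reflexivity|].
  rewrite !bowtie_black_l, L_share_mkNode, R_share_mkNode, !share_le_mkNode,
    !share_le_black_l by assumption.
  pose proof (share_le_white_l x Hx). pose proof (share_le_white_l y Hy).
  assert (~ (x = black /\ y = black)) by (intros [-> ->]; discriminate).
  intuition congruence.
Qed.

(* Every canonical node (neither white nor black) has a share separating L
   from R for ⊑: descend to a black child, wrapping the witness on the way up. *)
Lemma node_separable_le t : canonical t = true -> t <> white -> t <> black ->
  exists a, separates (fun z => share_le z t) a.
Proof.
  induction t as [b|x IHx y IHy]; intros H Hw Hb.
  { destruct b; [now destruct Hb | now destruct Hw]. }
  destruct (canonical_Node_inv _ _ H) as [Hx Hy].
  destruct x as [[|]|x1 x2].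
  - exists black. apply black_separates_le; auto.
  - destruct y as [[|]|y1 y2]; [| discriminate |].
    + exists black. apply black_separates_le; auto.
    + destruct IHy as [a Ha]; try discriminate; auto.
      exists (Node white a). apply (separates_lift_right _ _ _ Ha).
      intros B _. rewrite share_le_mkNode by assumption.
      pose proof (share_le_white_l white eq_refl). tauto.
  - destruct IHx as [a Ha]; try discriminate; auto.
    exists (Node a white). apply (separates_lift_left _ _ _ Ha).
    intros A _. rewrite share_le_mkNode by assumption.
    pose proof (share_le_white_l y Hy). tauto.
Qed.

Lemma nonunary_separable tau : canonical tau = true -> tau <> white ->
  black_leaves tau <> 1 -> exists a, separates (fun x => share_lt x tau) a.
Proof.
  induction tau as [b|l IHl r IHr]; intros H Hw Hb.
  { destruct b; [now destruct Hb | now destruct Hw]. }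
  destruct (canonical_Node_inv _ _ H) as [Hl Hr].
  destruct (white_dec l) as [->|Hlw]; [|destruct (white_dec r) as [->|Hrw]].
  -
    assert (Hrw : r <> white) by (intros ->; discriminate).
    destruct (IHr Hr Hrw ltac:(simpl in Hb; lia)) as [a Ha].
    exists (Node white a). apply (separates_lift_right _ _ _ Ha).
    intros B HB. rewrite share_lt_mkNode_white_l by auto. tauto.
  -
    destruct (IHl Hl Hlw ltac:(simpl in Hb; lia)) as [a Ha].
    exists (Node a white). apply (separates_lift_left _ _ _ Ha).
    intros A HA. rewrite share_lt_mkNode_white_r by auto. tauto.
  - (* both children nonempty: separate for ⊑ inside the left child *)
    destruct l as [[|]|l1 l2]; [| now destruct Hlw |].
    + exists black. apply separates_le_lt.
      * apply black_separates_le; [exact H | now left].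
      * intro E. injection E. auto.
      * discriminate.
    + destruct (node_separable_le (Node l1 l2) Hl Hlw ltac:(discriminate)) as [a Ha].
      exists (Node a white). apply (separates_lift_left _ _ _ Ha).
      intros A _. now apply share_lt_mkNode_white_below.
Qed.

Theorem lemma4 (tau : tree) (Htau : canonical tau = true) :
  unary tau <->
  (tau <> white /\
   forall tau' : tree, canonical tau' = true ->
     (share_lt (bowtie tau' L_share) tau <-> share_lt (bowtie tau' R_share) tau)).
Proof.
  split.
  - intro U. split.
    + intros ->. discriminate.
    + exact (unary_agrees tau Htau U).
  - intros [Hw Hagree]. unfold unary.
    destruct (PeanoNat.Nat.eq_dec (black_leaves tau) 1) as [Hone|Hne]; [exact Hone|].
    destruct (nonunary_separable tau Htau Hw Hne) as [a [Ha N]].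
    exfalso. exact (N (Hagree a Ha)).
Qed.
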